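(* Let $D>0$, $t\ge0$, and for $\gamma\ge9$ let $r_2(\gamma)=\frac{\gamma-1-\sqrt{(\gamma-1)(\gamma-9)}}{4}$. Then $$\min_{\gamma\ge 9}\big(\gamma D+r_2(\gamma)\,t\big)=5D+t+2\sqrt{2D(2D+t)},$$ the minimum being attained (for $t>0$) at $\gamma=5+2\frac{4D+t}{\sqrt{2D(2D+t)}}$, where the corresponding optimal strategy of Theorem 3 is $x_i=\tfrac12\Big(\big(1+\tfrac{2D}{\sqrt{2D(2D+t)}}\big)^i-1\Big)t$. Moreover $5D+t+2\sqrt{2D(2D+t)}\le 9D+2t$, with equality if and only if $t=0$.
   Context: In the turn-cost search model without a lower bound on $D$, a strategy achieving worst-case total cost $\gamma D+\phi$ exists with minimal $\phi=r_2(\gamma)t$ for each $\gamma\ge9$ (Theorem 3), attained by $x_i=\tfrac12(r_2(\gamma)^i-1)t$. *)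

From Stdlib Require Import Reals.
Open Scope R_scope.

Definition r2 (gamma : R) : R :=
  (gamma - 1 - sqrt ((gamma - 1) * (gamma - 9))) / 4.

Definition cost (D t gamma : R) : R := gamma * D + r2 gamma * t.

Definition strategy (gamma t : R) (i : nat) : R := / 2 * (r2 gamma ^ i - 1) * t.

(** Substituting [gamma = 5 + w/2 + 8/w] with [0 < w <= 4] (a bijection onto
    [gamma >= 9], since [(gamma-1)(gamma-9) = (8/w - w/2)^2]) turns [r2 gamma]
    into [1 + w/4], so the cost becomes [5D + t + 8D/w + (2D+t) w/4].  By AM-GM
    this is at least [5D + t + 2 sqrt(2D(2D+t))], with equality at
    [w = 8D / sqrt(2D(2D+t))], which is the parameter of [gamma*]. *)

From Stdlib Require Import Reals Lra Psatz.
Open Scope R_scope.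

Lemma two_sqrt_mul_le_div_add (a b w : R) :
  0 <= a -> 0 <= b -> 0 < w -> 2 * sqrt (a * b) <= a / w + b * w.
Proof.
  intros Ha Hb Hw.
  assert (Hab : sqrt (a * b) * sqrt (a * b) = a * b) by (apply sqrt_sqrt; nra).
  assert (0 <= sqrt (a * b)) by apply sqrt_pos.
  apply Rmult_le_reg_r with w; [exact Hw|].
  replace ((a / w + b * w) * w) with (a + b * w * w) by (field; lra).
  assert (Hsq : (2 * sqrt (a * b) * w) * (2 * sqrt (a * b) * w)
                <= (a + b * w * w) * (a + b * w * w)).
  { replace ((2 * sqrt (a * b) * w) * (2 * sqrt (a * b) * w))
      with (4 * (sqrt (a * b) * sqrt (a * b)) * (w * w)) by ring.
    rewrite Hab.
    pose proof (Rle_0_sqr (a - b * w * w)). unfold Rsqr in *. nra. }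
  apply Rsqr_incr_0_var; unfold Rsqr; nra.
Qed.

Lemma two_sqrt_mul_add_le (a t : R) :
  0 <= a -> 0 <= t -> 2 * sqrt (a * (a + t)) <= 2 * a + t.
Proof.
  intros Ha Ht.
  assert (Hs : sqrt (a * (a + t)) * sqrt (a * (a + t)) = a * (a + t))
    by (apply sqrt_sqrt; nra).
  assert (0 <= sqrt (a * (a + t))) by apply sqrt_pos.
  nra.
Qed.

Lemma two_sqrt_mul_add_eq (a t : R) :
  0 <= a -> 0 <= t -> 2 * sqrt (a * (a + t)) = 2 * a + t <-> t = 0.
Proof.
  intros Ha Ht.
  assert (Hs : sqrt (a * (a + t)) * sqrt (a * (a + t)) = a * (a + t))
    by (apply sqrt_sqrt; nra).
  split; intros Heq.
  - nra.
  - subst t. rewrite Rplus_0_r, sqrt_square; lra.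
Qed.

Definition gamma_param (w : R) : R := 5 + w / 2 + 8 / w.

Lemma gamma_param_ge9 (w : R) : 0 < w -> 9 <= gamma_param w.
Proof.
  intros Hw. unfold gamma_param.
  assert (4 <= w / 2 + 8 / w); [|lra].
  apply Rmult_le_reg_r with (2 * w); [lra|].
  replace ((w / 2 + 8 / w) * (2 * w)) with (w * w + 16) by (field; lra).
  pose proof (Rle_0_sqr (w - 4)). unfold Rsqr in *. lra.
Qed.

Lemma r2_gamma_param (w : R) : 0 < w <= 4 -> r2 (gamma_param w) = 1 + w / 4.
Proof.
  intros Hw. unfold r2, gamma_param.
  assert (Hq : (5 + w / 2 + 8 / w - 1) * (5 + w / 2 + 8 / w - 9)
               = (8 / w - w / 2) * (8 / w - w / 2)) by (field; lra).
  assert (0 <= 8 / w - w / 2).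
  { apply Rmult_le_reg_r with (2 * w); [lra|].
    replace ((8 / w - w / 2) * (2 * w)) with (16 - w * w) by (field; lra).
    nra. }
  rewrite Hq, sqrt_square by assumption.
  field. lra.
Qed.

Lemma gamma_param_onto (g : R) :
  9 <= g -> exists w, 0 < w <= 4 /\ gamma_param w = g.
Proof.
  intros Hg.
  set (q := sqrt ((g - 1) * (g - 9))).
  assert (Hq2 : q * q = (g - 1) * (g - 9)) by (apply sqrt_sqrt; nra).
  assert (Hq0 : 0 <= q) by apply sqrt_pos.
  assert (Hw : (g - 5 - q) * (g - 5 + q) = 16) by nra.
  exists (g - 5 - q). split; [split|].
  - nra.
  - nra.
  - unfold gamma_param.
    apply Rmult_eq_reg_r with (g - 5 - q); [|nra].
    replace ((5 + (g - 5 - q) / 2 + 8 / (g - 5 - q)) * (g - 5 - q))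
      with ((5 + (g - 5 - q) / 2) * (g - 5 - q) + 8) by (field; nra).
    nra.
Qed.

Lemma cost_gamma_param (D t w : R) : 0 < w <= 4 ->
  cost D t (gamma_param w) = 5 * D + t + (8 * D / w + (2 * D + t) / 4 * w).
Proof.
  intros Hw. unfold cost. rewrite r2_gamma_param by exact Hw.
  unfold gamma_param. field. lra.
Qed.

Lemma cost_ge (D t g : R) : 0 <= D -> 0 <= t -> 9 <= g ->
  5 * D + t + 2 * sqrt (2 * D * (2 * D + t)) <= cost D t g.
Proof.
  intros HD Ht Hg.
  destruct (gamma_param_onto g Hg) as [w [Hw <-]].
  rewrite cost_gamma_param by exact Hw.
  replace (2 * D * (2 * D + t)) with (8 * D * ((2 * D + t) / 4)) by field.
  pose proof (two_sqrt_mul_le_div_add (8 * D) ((2 * D + t) / 4) w) as Hamgm.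
  lra.
Qed.

Section Minimiser.

Variables D t : R.
Hypothesis hD : 0 < D.
Hypothesis ht : 0 <= t.

Let S := sqrt (2 * D * (2 * D + t)).

Lemma S_sqr : S * S = 2 * D * (2 * D + t).
Proof. apply sqrt_sqrt. nra. Qed.

Lemma S_pos : 0 < S.
Proof. apply sqrt_lt_R0. nra. Qed.

Lemma param_opt_bounds : 0 < 8 * D / S <= 4.
Proof.
  pose proof S_pos. pose proof S_sqr.
  split.
  - apply Rdiv_lt_0_compat; lra.
  - apply Rmult_le_reg_r with S; [lra|].
    replace (8 * D / S * S) with (8 * D) by (field; lra).
    nra.
Qed.

Lemma gamma_param_opt :
  gamma_param (8 * D / S) = 5 + 2 * ((4 * D + t) / S).
Proof.
  pose proof S_pos. pose proof S_sqr.
  unfold gamma_param.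
  apply Rmult_eq_reg_r with (D * S); [|nra].
  replace ((5 + 8 * D / S / 2 + 8 / (8 * D / S)) * (D * S))
    with (5 * D * S + 4 * D * D + S * S) by (field; lra).
  replace ((5 + 2 * ((4 * D + t) / S)) * (D * S))
    with (5 * D * S + 2 * D * (4 * D + t)) by (field; lra).
  nra.
Qed.

Lemma cost_opt :
  cost D t (gamma_param (8 * D / S)) = 5 * D + t + 2 * S.
Proof.
  pose proof S_pos. pose proof S_sqr.
  rewrite cost_gamma_param by exact param_opt_bounds.
  apply Rplus_eq_compat_l.
  apply Rmult_eq_reg_r with S; [|lra].
  replace ((8 * D / (8 * D / S) + (2 * D + t) / 4 * (8 * D / S)) * S)
    with (S * S + 2 * D * (2 * D + t)) by (field; lra).
  nra.
Qed.

Lemma r2_opt : r2 (gamma_param (8 * D / S)) = 1 + 2 * D / S.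
Proof.
  pose proof S_pos.
  rewrite r2_gamma_param by exact param_opt_bounds.
  field. lra.
Qed.

End Minimiser.

Theorem mainTheorem5 (D t : R) (hD : 0 < D) (ht : 0 <= t) :
  let v := 5 * D + t + 2 * sqrt (2 * D * (2 * D + t)) in
  ((forall gamma, 9 <= gamma -> v <= cost D t gamma) /\
   (exists gamma, 9 <= gamma /\ cost D t gamma = v)) /\
  (0 < t ->
   let gstar := 5 + 2 * ((4 * D + t) / sqrt (2 * D * (2 * D + t))) in
   9 <= gstar /\ cost D t gstar = v /\
   (forall i : nat, strategy gstar t i =
      / 2 * ((1 + 2 * D / sqrt (2 * D * (2 * D + t))) ^ i - 1) * t)) /\
  v <= 9 * D + 2 * t /\
  (v = 9 * D + 2 * t <-> t = 0).
Proof.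
  intros v.
  pose proof (param_opt_bounds D t hD ht) as Hw.
  pose proof (gamma_param_ge9 _ (proj1 Hw)) as Hg9.
  rewrite (gamma_param_opt D t hD ht) in Hg9.
  pose proof (cost_opt D t hD ht) as Hcost.
  pose proof (r2_opt D t hD ht) as Hr2.
  rewrite (gamma_param_opt D t hD ht) in Hcost, Hr2.
  assert (HD2 : 0 <= 2 * D) by lra.
  pose proof (two_sqrt_mul_add_le (2 * D) t HD2 ht) as Hle.
  destruct (two_sqrt_mul_add_eq (2 * D) t HD2 ht) as [Heq_t0 Ht0_eq].
  split; [split|split; [|split]].
  - intros g Hg. apply cost_ge; lra.
  - eexists. split; [exact Hg9 | exact Hcost].
  - intros _. repeat split; [exact Hg9 | exact Hcost |].
    intros i. unfold strategy. rewrite Hr2. reflexivity.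
  - unfold v. lra.
  - unfold v. split; intros H.
    + apply Heq_t0. lra.
    + pose proof (Ht0_eq H). lra.
Qed.
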